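(* Let $S$ be a set of Boolean relations such that (i) every relation in $S$ is bijunctive, (ii) $S$ contains a relation which is not $\mathsf{F}$-valid, (iii) $S$ contains a relation which is not $\mathsf{T}$-valid, and (iv) $[x \neq y] \in Rep_{NC}(S)$. Then one of the following holds: (a) $Rep_{NC}(S)$ contains all bijunctive relations; (b) $S \subseteq Rep_{NC}(\{[x],[x\neq y]\})$.
   Context: $\mathbb{B} = \{\mathsf{F},\mathsf{T}\}$; $[\varphi]$ is the relation of tuples satisfying $\varphi$; $[x] = \{\mathsf{T}\}$. A relation is bijunctive if it is $[\varphi]$ for a conjunction $\varphi$ of clauses with at most 2 literals; $i$-valid if $(i,\dots,i)\in R$. For a set $S$ of relations, $Rep_{NC}(S)$ is the set of relations $[\theta]$ for $\theta$ of the form $(\exists \vec x)\bigwedge_{i<n} R_i(\vec x,\vec y)$ with $R_i\in S$ (existentially quantified finite conjunctions of atoms from $S$, without constants). *)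

From Stdlib Require Import List.
From mathcomp Require Import all_boot.
Set Implicit Arguments. Unset Strict Implicit. Unset Printing Implicit Defensive.

(* A Boolean relation: an arity n together with a set of n-tuples over B = bool
   (false = F, true = T). *)
Definition brel := {n : nat & {set n.-tuple bool}}.
Definition arity (R : brel) : nat := projT1 R.
Definition tuples (R : brel) : {set (arity R).-tuple bool} := projT2 R.
Definition mkrel (n : nat) (A : {set n.-tuple bool}) : brel := existT _ n A.

(* A literal: a variable index with a polarity; x_i is satisfied by t iff
   t_i = b.  A clause is a disjunction of literals; a formula a conjunction of
   clauses. *)
Definition lit_sat n (t : n.-tuple bool) (l : 'I_n * bool) : bool := tnth t l.1 == l.2.
Definition cnf_sat n (t : n.-tuple bool) (cs : seq (seq ('I_n * bool))) : bool :=
  all (fun c => has (lit_sat t) c) cs.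

Definition bijunctive (R : brel) : Prop :=
  exists cs : seq (seq ('I_(arity R) * bool)),
    all (fun c => size c <= 2) cs /\
    tuples R = [set t | cnf_sat t cs].

Definition valid (i : bool) (R : brel) : Prop :=
  [tuple i | _ < arity R] \in tuples R.

(* An atom R(z_1,...,z_a) of a formula with free variables y_1..y_m and
   existentially quantified variables x_1..x_k: each argument is a variable
   (inl j = y_j, inr j = x_j); no constants. *)
Record atom (m k : nat) : Type := Atom {
  at_rel : brel;
  at_args : 'I_(arity at_rel) -> 'I_m + 'I_k }.

Definition atom_sat m k (a : atom m k) (v : 'I_m + 'I_k -> bool) : bool :=
  [tuple v (@at_args m k a i) | i < arity (at_rel a)] \in tuples (at_rel a).

Definition RepNC (S : brel -> Prop) (R : brel) : Prop :=
  exists (k : nat) (atoms : seq (atom (arity R) k)),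
    (forall a, List.In a atoms -> S (at_rel a)) /\
    forall y : (arity R).-tuple bool,
      y \in tuples R <->
      exists x : 'I_k -> bool,
        forall a, List.In a atoms ->
          atom_sat a (fun z => match z with inl j => tnth y j | inr j => x j end).

Definition rel_x : brel := @mkrel 1 [set t | tnth t ord0].
Definition rel_neq : brel :=
  @mkrel 2 [set t | tnth t ord0 != tnth t (lift ord0 ord0)].

(* If some relation R of S is not pp-definable from [x] and [x <> y], then R
   differs from the set of tuples satisfying every unit constraint and every
   constraint [l1 xor l2] valid in R.  A tuple of that set outside R violates a
   2-clause [l1 \/ l2] of R for which R realises all three satisfying patterns
   of (l1, l2), so [exists x, R(x) /\ (u <-> l1) /\ (v <-> l2)] defines [u \/ v].
   From [u \/ v] and [<>] (hence [=], literals and the empty relation [x <> x])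
   every 2-clause, and so every bijunctive relation, is pp-definable. *)

From mathcomp Require Import all_boot.
From Stdlib Require Import Classical FunctionalExtensionality.
Set Implicit Arguments. Unset Strict Implicit. Unset Printing Implicit Defensive.

Definition env n k (y : 'I_n -> bool) (x : 'I_k -> bool) : 'I_n + 'I_k -> bool :=
  fun z => match z with inl j => y j | inr j => x j end.

Definition ppdef (S : brel -> Prop) n (P : ('I_n -> bool) -> Prop) :=
  exists k (atoms : seq (atom n k)), (forall a, List.In a atoms -> S (at_rel a)) /\
    forall y, P y <-> exists x : 'I_k -> bool,
      forall a, List.In a atoms -> atom_sat a (env y x).
Arguments ppdef : clear implicits.

Definition atom_map m k m' k' (s : 'I_m + 'I_k -> 'I_m' + 'I_k') (a : atom m k) :=
  @Atom m' k' (at_rel a) (fun i => s (at_args i)).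

Lemma atom_sat_map m k m' k' (s : 'I_m + 'I_k -> 'I_m' + 'I_k') a v :
  atom_sat (atom_map s a) v = atom_sat a (v \o s).
Proof. by []. Qed.

Lemma atom_sat_ext m k (a : atom m k) v w : v =1 w -> atom_sat a v -> atom_sat a w.
Proof. by move=> vw; rewrite /atom_sat (eq_mktuple _ (fun i => vw _)). Qed.

Definition join n k (y : 'I_n -> bool) (x : 'I_k -> bool) (i : 'I_(n + k)) : bool :=
  match split i with inl a => y a | inr b => x b end.

Lemma join_lshift n k y x (a : 'I_n) : @join n k y x (lshift k a) = y a.
Proof. by rewrite /join (unsplitK (inl a : 'I_n + 'I_k)). Qed.

Lemma join_rshift n k y x (b : 'I_k) : @join n k y x (rshift n b) = x b.
Proof. by rewrite /join (unsplitK (inr b : 'I_n + 'I_k)). Qed.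

Lemma mktuple_join_rshift n k (y : 'I_n -> bool) (x : 'I_k -> bool) :
  [tuple join y x (rshift n a) | a < k] = [tuple x a | a < k].
Proof. by apply: eq_mktuple => a; rewrite join_rshift. Qed.

Lemma mktuple_tnth n (r : n.-tuple bool) : [tuple tnth r i | i < n] = r.
Proof. by apply: eq_from_tnth => i; rewrite tnth_mktuple. Qed.

Definition var_lshift n k1 k2 (z : 'I_n + 'I_k1) : 'I_n + 'I_(k1 + k2) :=
  match z with inl j => inl j | inr c => inr (lshift k2 c) end.
Definition var_rshift n k1 k2 (z : 'I_n + 'I_k2) : 'I_n + 'I_(k1 + k2) :=
  match z with inl j => inl j | inr c => inr (rshift k1 c) end.
Definition var_split n k k' (z : 'I_(n + k) + 'I_k') : 'I_n + 'I_(k + k') :=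
  match z with
  | inl i => match split i with inl a => inl a | inr b => inr (lshift k' b) end
  | inr c => inr (rshift k c) end.
Definition var_rename m n k (g : 'I_m -> 'I_n) (z : 'I_m + 'I_k) : 'I_n + 'I_k :=
  match z with inl j => inl (g j) | inr c => inr c end.

Section PPDefinability.

Variable S : brel -> Prop.

Lemma ppdef_ext n P Q : ppdef S n P -> (forall y, P y <-> Q y) -> ppdef S n Q.
Proof. by move=> [k [A [AS defP]]] PQ; exists k, A; split => // y; rewrite -PQ. Qed.

Lemma ppdef_true n : ppdef S n (fun _ => True).
Proof. by exists 0, [::]; split => // y; split => // _; exists (fun _ => false). Qed.

Lemma ppdef_atom n Q (f : 'I_(arity Q) -> 'I_n) : S Q ->
  ppdef S n (fun y => [tuple y (f i) | i < arity Q] \in tuples Q).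
Proof.
move=> SQ; exists 0, [:: @Atom n 0 Q (fun i => inl (f i))]; split.
  by move=> a [<-|[]].
move=> y; split => [yQ | [x sat]]; first by exists (fun _ => false) => a [<-|[]].
exact: sat (or_introl erefl).
Qed.

Lemma ppdef_and n P1 P2 :
  ppdef S n P1 -> ppdef S n P2 -> ppdef S n (fun y => P1 y /\ P2 y).
Proof.
move=> [k1 [A1 [AS1 defP1]]] [k2 [A2 [AS2 defP2]]].
exists (k1 + k2), (map (atom_map (@var_lshift n k1 k2)) A1 ++
                   map (atom_map (@var_rshift n k1 k2)) A2); split.
  by move=> a /List.in_app_iff [] /List.in_map_iff [b [<- Ab]]; [exact: AS1 | exact: AS2].
move=> y; rewrite defP1 defP2; split.
  move=> [[x1 sat1] [x2 sat2]]; exists (join x1 x2).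
  move=> a /List.in_app_iff [] /List.in_map_iff [b [<- Ab]]; rewrite atom_sat_map.
    by apply: atom_sat_ext (sat1 b Ab); case=> [j|c] //=; rewrite join_lshift.
  by apply: atom_sat_ext (sat2 b Ab); case=> [j|c] //=; rewrite join_rshift.
move=> [x sat]; split.
  exists (fun c => x (lshift k2 c)) => b Ab.
  have := sat _ (List.in_or_app _ _ _ (or_introl (List.in_map _ _ _ Ab))).
  by rewrite atom_sat_map; apply: atom_sat_ext; case.
exists (fun c => x (rshift k1 c)) => b Ab.
have := sat _ (List.in_or_app _ _ _ (or_intror (List.in_map _ _ _ Ab))).
by rewrite atom_sat_map; apply: atom_sat_ext; case.
Qed.

Lemma ppdef_exists n k P :
  ppdef S (n + k) P -> ppdef S n (fun y => exists x : 'I_k -> bool, P (join y x)).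
Proof.
move=> [k' [A [AS defP]]].
exists (k + k'), (map (atom_map (@var_split n k k')) A); split.
  by move=> a /List.in_map_iff [b [<- Ab]]; exact: AS.
move=> y; split.
  move=> [x /defP [x' sat]]; exists (join x x') => a /List.in_map_iff [b [<- Ab]].
  rewrite atom_sat_map; apply: atom_sat_ext (sat b Ab).
  case=> [i|c] /=; last by rewrite join_rshift.
  rewrite /var_split /join; case: (split i) => [a0|a0] //=.
  by rewrite (unsplitK (inl a0 : 'I_k + 'I_k')).
move=> [x sat]; exists (fun b => x (lshift k' b)); apply/defP.
exists (fun c => x (rshift k c)) => b Ab.
have := sat _ (List.in_map _ _ _ Ab).
rewrite atom_sat_map; apply: atom_sat_ext; case=> [i|c] //=.
by rewrite /var_split /join; case: (split i).
Qed.

Lemma ppdef_rename m n P (g : 'I_m -> 'I_n) :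
  ppdef S m P -> ppdef S n (fun y => P (y \o g)).
Proof.
move=> [k [A [AS defP]]].
exists k, (map (atom_map (@var_rename m n k g)) A); split.
  by move=> a /List.in_map_iff [b [<- Ab]]; exact: AS.
move=> y; rewrite defP; split => -[x sat]; exists x.
  move=> a /List.in_map_iff [b [<- Ab]].
  by rewrite atom_sat_map; apply: atom_sat_ext (sat b Ab); case.
move=> b Ab; have := sat _ (List.in_map _ _ _ Ab).
by rewrite atom_sat_map; apply: atom_sat_ext; case.
Qed.

Lemma ppdef_all_seq n (I : eqType) (s : seq I) (P : I -> ('I_n -> bool) -> Prop) :
  (forall i, i \in s -> ppdef S n (P i)) ->
  ppdef S n (fun y => forall i, i \in s -> P i y).
Proof.
elim: s => [|a s IHs] defP.
  by apply: ppdef_ext (ppdef_true n) _ => y; split => // _ i; rewrite in_nil.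
have defPs : ppdef S n (fun y => forall i, i \in s -> P i y).
  by apply: IHs => i si; apply: defP; rewrite in_cons si orbT.
apply: ppdef_ext (ppdef_and (defP a (mem_head a s)) defPs) _ => y; split.
  by move=> [Pa Ps] i; rewrite in_cons => /predU1P [->|/Ps].
by move=> Py; split => [|i si]; apply: Py; rewrite in_cons ?eqxx ?si ?orbT.
Qed.

Lemma ppdef_all n (I : finType) (P : I -> ('I_n -> bool) -> Prop) :
  (forall i, ppdef S n (P i)) -> ppdef S n (fun y => forall i, P i y).
Proof.
move=> defP; apply: ppdef_ext (ppdef_all_seq (s := enum I) (fun i _ => defP i)) _.
by move=> y; split => Py i; [apply: Py; rewrite mem_enum | move=> _; apply: Py].
Qed.

Lemma RepNCE R :
  RepNC S R <-> ppdef S (arity R) (fun y => [tuple y i | i < arity R] \in tuples R).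
Proof.
split=> -[k [A [AS defR]]]; exists k, A; split => // y.
  rewrite defR; split => -[x sat]; exists x => a Aa; apply: atom_sat_ext (sat a Aa);
    by case=> [j|c] //=; rewrite tnth_mktuple.
by have := defR (tnth y); rewrite mktuple_tnth.
Qed.

End PPDefinability.

Arguments RepNCE {S R}.

Local Notation w0 := (@ord0 1).
Local Notation w1 := (@lift 2 ord0 ord0).

Section WithNeq.

Variable S : brel -> Prop.
Hypothesis neqS : RepNC S rel_neq.

Lemma ppdef_pair (F : bool -> bool -> Prop) :
  ppdef S 2 (fun w => F (w w0) (w w1)) ->
  forall n (a b : 'I_n), ppdef S n (fun y => F (y a) (y b)).
Proof.
by move=> defF n a b; apply: (ppdef_rename (fun z : 'I_2 => if val z == 0 then a else b) defF).
Qed.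

Lemma ppdef_neq n (a b : 'I_n) : ppdef S n (fun y => y a != y b).
Proof.
apply: (ppdef_pair (F := fun u v => u != v)).
by apply: ppdef_ext (RepNCE.1 neqS) _ => w; rewrite inE !tnth_mktuple.
Qed.

Lemma ppdef_eq n (a b : 'I_n) : ppdef S n (fun y => y a = y b).
Proof.
apply: ppdef_ext (ppdef_exists (k := 1) (ppdef_and (ppdef_neq (lshift 1 a) (rshift n ord0))
                                          (ppdef_neq (rshift n ord0) (lshift 1 b)))) _.
move=> y; split.
  move=> [x]; rewrite !join_lshift !join_rshift => -[].
  by case: (y a); case: (y b); case: (x ord0).
by move=> ab; exists (fun _ => ~~ y a); rewrite !join_lshift !join_rshift ab; case: (y b).
Qed.

Lemma ppdef_false n : ppdef S n (fun _ => False).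
Proof.
apply: ppdef_ext (ppdef_exists (k := 1) (ppdef_neq (rshift n ord0) (rshift n ord0))) _.
by move=> y; split => [[x]|[]]; rewrite eqxx.
Qed.

Lemma RepNC_set0 R : tuples R = set0 -> RepNC S R.
Proof.
move=> R0; apply/RepNCE; apply: ppdef_ext (ppdef_false _) _ => y.
by rewrite R0 in_set0.
Qed.

Lemma ppdef_eq_lit n (a i : 'I_n) c : ppdef S n (fun y => y a = (y i == c)).
Proof.
case: c; first by apply: ppdef_ext (ppdef_eq a i) _ => y; case: (y a); case: (y i).
by apply: ppdef_ext (ppdef_neq a i) _ => y; case: (y a); case: (y i).
Qed.

Lemma ppdef_lits (F : bool -> bool -> Prop) :
  ppdef S 2 (fun w => F (w w0) (w w1)) ->
  forall n (i j : 'I_n) b1 b2, ppdef S n (fun y => F (y i == b1) (y j == b2)).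
Proof.
move=> defF n i j b1 b2.
apply: ppdef_ext (ppdef_exists (k := 2) (ppdef_and (ppdef_eq_lit (rshift n w0) (lshift 2 i) b1)
   (ppdef_and (ppdef_eq_lit (rshift n w1) (lshift 2 j) b2)
              (ppdef_pair defF (rshift n w0) (rshift n w1))))) _.
move=> y; split.
  by move=> [x]; rewrite !join_lshift !join_rshift => -[-> [->]].
move=> Fy; exists (fun z : 'I_2 => if val z == 0 then y i == b1 else y j == b2).
by rewrite !join_lshift !join_rshift.
Qed.

Hypothesis orS : ppdef S 2 (fun w => w w0 || w w1).

Lemma ppdef_clause n (c : seq ('I_n * bool)) : size c <= 2 ->
  ppdef S n (fun y => has (lit_sat [tuple y i | i < n]) c).
Proof.
case: c => [|[i b1] [|[j b2] [|//]]] _.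
- by apply: ppdef_ext (ppdef_false n) _.
- apply: ppdef_ext (ppdef_lits (F := fun u v => u || v) orS i i b1 b1) _ => y.
  by rewrite /lit_sat /= tnth_mktuple orbF orbb.
- apply: ppdef_ext (ppdef_lits (F := fun u v => u || v) orS i j b1 b2) _ => y.
  by rewrite /lit_sat /= !tnth_mktuple orbF.
Qed.

Lemma bijunctive_RepNC R : bijunctive R -> RepNC S R.
Proof.
move=> [cs [cs2 Rcs]]; apply/RepNCE.
have defcs := ppdef_all_seq (s := cs) (fun c c_cs => ppdef_clause (allP cs2 c c_cs)).
by apply: ppdef_ext defcs _ => y; rewrite Rcs inE; split => /allP.
Qed.

End WithNeq.

Definition unit_neq : brel -> Prop := fun Q => Q = rel_x \/ Q = rel_neq.

Lemma RepNC_unit_neq_neq : RepNC unit_neq rel_neq.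
Proof. by apply/RepNCE/(ppdef_atom id); right. Qed.

Lemma ppdef_unit_neq_const n (i : 'I_n) b : ppdef unit_neq n (fun y => y i = b).
Proof.
have defx : ppdef unit_neq 2 (fun w => w w0).
  apply: ppdef_ext (ppdef_atom (fun _ => w0) (or_introl erefl)) _ => w.
  by rewrite inE tnth_mktuple.
apply: ppdef_ext (ppdef_lits RepNC_unit_neq_neq (F := fun u _ => u) defx i i b b) _ => y.
by split => [/eqP|->].
Qed.

Lemma ppdef_unit_neq_xor n (i j : 'I_n) b1 b2 :
  ppdef unit_neq n (fun y => (y i == b1) != (y j == b2)).
Proof.
exact: (ppdef_lits RepNC_unit_neq_neq (F := fun u v => u != v)
                   (ppdef_neq RepNC_unit_neq_neq w0 w1)).
Qed.

Section Hull.

Variable R : brel.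

Definition forced (i : 'I_(arity R)) b := [forall r in tuples R, tnth r i == b].

Definition forced_xor (i j : 'I_(arity R)) b1 b2 :=
  [forall r in tuples R, (tnth r i == b1) != (tnth r j == b2)].

Definition in_hull (y : 'I_(arity R) -> bool) : Prop :=
  (forall i b, forced i b -> y i = b) /\
  (forall i j b1 b2, forced_xor i j b1 b2 -> (y i == b1) != (y j == b2)).

Lemma ppdef_hull : ppdef unit_neq (arity R) in_hull.
Proof.
apply: ppdef_and.
  apply: (ppdef_all (P := fun i y => forall b, forced i b -> y i = b)) => i.
  apply: (ppdef_all (P := fun b y => forced i b -> y i = b)) => b.
  case: (forced i b); last by apply: ppdef_ext (ppdef_true _ _) _.
  by apply: ppdef_ext (ppdef_unit_neq_const i b) _ => y; split => [? _|/(_ isT)].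
apply: (ppdef_all (P := fun i y => forall j b1 b2,
  forced_xor i j b1 b2 -> (y i == b1) != (y j == b2))) => i.
apply: (ppdef_all (P := fun j y => forall b1 b2,
  forced_xor i j b1 b2 -> (y i == b1) != (y j == b2))) => j.
apply: (ppdef_all (P := fun b1 y => forall b2,
  forced_xor i j b1 b2 -> (y i == b1) != (y j == b2))) => b1.
apply: (ppdef_all (P := fun b2 y =>
  forced_xor i j b1 b2 -> (y i == b1) != (y j == b2))) => b2.
case: (forced_xor i j b1 b2); last by apply: ppdef_ext (ppdef_true _ _) _.
by apply: ppdef_ext (ppdef_unit_neq_xor i j b1 b2) _ => y; split => [? _|/(_ isT)].
Qed.

Lemma RepNC_of_hull : (forall t, in_hull (tnth t) -> t \in tuples R) -> RepNC unit_neq R.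
Proof.
move=> hullR; apply/RepNCE; apply: ppdef_ext ppdef_hull _ => y.
have tnthE : tnth [tuple y i | i < arity R] = y := functional_extensionality _ _ (tnth_mktuple y).
split => [|yR]; first by rewrite -{1}tnthE; apply: hullR.
split => [i b /forall_inP/(_ _ yR)|i j b1 b2 /forall_inP/(_ _ yR)]; rewrite !tnth_mktuple //.
by move/eqP.
Qed.

Lemma hull_gap_clause t : bijunctive R -> tuples R != set0 ->
  in_hull (tnth t) -> t \notin tuples R ->
  exists i j b1 b2, [/\ forall r, r \in tuples R -> (tnth r i == b1) || (tnth r j == b2),
    ~~ forced i b1, ~~ forced j b2 & ~~ forced_xor i j b1 b2].
Proof.
move=> [cs [cs2 Rcs]] /set0Pn [r0 r0R] [hull_forced hull_xor] tR.
have /allPn [c c_cs t_c] : ~~ cnf_sat t cs by rewrite Rcs inE in tR.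
have R_c r : r \in tuples R -> has (lit_sat r) c by rewrite Rcs inE => /allP; apply.
case: c c_cs t_c R_c (allP cs2 c c_cs) => [|[i b1] [|[j b2] [|//]]] c_cs t_c R_c _.
- by have := R_c r0 r0R.
- have /hull_forced ti : forced i b1 by apply/forall_inP => r /R_c; rewrite /= orbF.
  by rewrite /= /lit_sat /= ti eqxx in t_c.
exists i, j, b1, b2; split.
- by move=> r /R_c; rewrite /= orbF.
- by apply: contra t_c => /hull_forced ti; rewrite /= /lit_sat /= ti eqxx.
- by apply: contra t_c => /hull_forced tj; rewrite /= /lit_sat /= tj eqxx orbT.
apply: contra t_c => /hull_xor; rewrite /= /lit_sat /= orbF.
by case: (_ == b1); case: (_ == b2).
Qed.

End Hull.

Lemma ppdef_lit_image S R (i j : 'I_(arity R)) b1 b2 : S R -> RepNC S rel_neq ->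
  ppdef S 2 (fun w => exists2 r, r \in tuples R &
                        w w0 = (tnth r i == b1) /\ w w1 = (tnth r j == b2)).
Proof.
move=> SR neqS.
apply: ppdef_ext (ppdef_exists (k := arity R) (ppdef_and (ppdef_atom (@rshift 2 _) SR)
  (ppdef_and (ppdef_eq_lit neqS (lshift _ w0) (rshift 2 i) b1)
             (ppdef_eq_lit neqS (lshift _ w1) (rshift 2 j) b2)))) _ => w.
split.
  move=> [x]; rewrite mktuple_join_rshift !join_lshift !join_rshift => -[xR [-> ->]].
  by exists [tuple x a | a < arity R]; rewrite ?tnth_mktuple.
move=> [r rR [E0 E1]]; exists (tnth r).
by rewrite mktuple_join_rshift mktuple_tnth !join_lshift !join_rshift E0 E1.
Qed.

Lemma ppdef_or_of_clause S R (i j : 'I_(arity R)) b1 b2 : S R -> RepNC S rel_neq ->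
  (forall r, r \in tuples R -> (tnth r i == b1) || (tnth r j == b2)) ->
  ~~ forced i b1 -> ~~ forced j b2 -> ~~ forced_xor i j b1 b2 ->
  ppdef S 2 (fun w => w w0 || w w1).
Proof.
move=> SR neqS R_ij /forall_inPn [r1 r1R r1i] /forall_inPn [r2 r2R r2j]
  /forall_inPn [r3 r3R r3ij].
apply: ppdef_ext (ppdef_lit_image i j b1 b2 SR neqS) _ => w.
split => [[r /R_ij rij [-> ->]] // | ].
case: (w w0); case: (w w1) => // _; [exists r3 | exists r2 | exists r1] => //.
- by move: (R_ij r3 r3R) r3ij; case: (_ == b1); case: (_ == b2).
- by move: (R_ij r2 r2R) r2j; case: (_ == b1); case: (_ == b2).
- by move: (R_ij r1 r1R) r1i; case: (_ == b1); case: (_ == b2).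
Qed.

Lemma ppdef_or_of_not_RepNC S R : S R -> bijunctive R -> RepNC S rel_neq ->
  ~ RepNC unit_neq R -> ppdef S 2 (fun w => w w0 || w w1).
Proof.
move=> SR bijR neqS notR.
have R0 : tuples R != set0.
  by apply/eqP => R0; apply: notR; apply: (RepNC_set0 RepNC_unit_neq_neq R0).
case: (classic (exists t, in_hull (tnth t) /\ t \notin tuples R)) => [[t [t_hull tR]]|none].
  have [i [j [b1 [b2 [R_ij ni nj nij]]]]] := hull_gap_clause bijR R0 t_hull tR.
  exact: ppdef_or_of_clause SR neqS R_ij ni nj nij.
by case: notR; apply: RepNC_of_hull => t t_hull; apply/negPn/negP => tR; apply: none; exists t.
Qed.

Theorem mainTheorem12 (S : brel -> Prop) :
  (forall R, S R -> bijunctive R) ->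
  (exists R, S R /\ ~ valid false R) ->
  (exists R, S R /\ ~ valid true R) ->
  RepNC S rel_neq ->
  (forall R, bijunctive R -> RepNC S R) \/
  (forall R, S R -> RepNC (fun Q => Q = rel_x \/ Q = rel_neq) R).
Proof.
move=> S_bij _ _ neqS.
case: (classic (forall R, S R -> RepNC unit_neq R)) => [|not_all]; [by right | left].
have [R SR notR] : exists2 R, S R & ~ RepNC unit_neq R.
  by apply: NNPP => none; apply: not_all => R SR; apply: NNPP => notR; apply: none; exists R.
exact: bijunctive_RepNC neqS (ppdef_or_of_not_RepNC SR (S_bij R SR) neqS notR).
Qed.
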